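(* Assume (A1). Let $\delta>0$, $\beta>0$, and $\mathcal R=\{r_1,\dots,r_m\}$ with positive integers $r_1<\dots<r_m\le t$. Suppose the event $E$ described in the context holds. Then for every $1\le k\le m-1$, $$\lVert\hat{\bm C}^{[r_k]}(t)-\hat{\bm C}^{[r_{k+1}]}(t)\rVert_\infty>\mathcal T(k)\ \Longrightarrow\ \sum_{u=t-r_{k+1}+1}^{t-1}\lVert\bm C(u)-\bm C(u+1)\rVert_\infty>\frac{A_{\delta,n,m}\,\beta}{\sqrt{r_k}}.$$
   Context: For matrices $\lVert\bm M\rVert_\infty=\max_{i,j}|M_{ij}|$. Let $\ell_1,\dots,\ell_n:\mathbb{R}^d\to\{-1,1\}$ be functions and $X_1,X_2,\dots$ random inputs with $X_k\sim D_k$; (A1): for every finite $t$, $(X_1,\dots,X_t)\sim\prod_{k=1}^tD_k$. Correlation matrix $C_{ij}(k)=\mathbb{E}_{X\sim D_k}[\ell_i(X)\ell_j(X)]$; $\bm C^{[r]}(t)=\frac1r\sum_{k=t-r+1}^t\bm C(k)$; $\hat{\bm C}^{[r]}(t)=\frac1r\sum_{k=t-r+1}^t\bm v_k\bm v_k^T$ with $\bm v_k=(\ell_1(X_k),\dots,\ell_n(X_k))^T$. Let $A_{\delta,n,m}=\sqrt{2\ln[(2m-1)n(n-1)/\delta]}$ and, for $k\le m-1$, $\mathcal T(k)=\frac{2\beta A_{\delta,n,m}}{\sqrt{r_k}}+A_{\delta,n,m}\sqrt{\frac{1-r_k/r_{k+1}}{r_k}}$. The event $E$: for all $k\le m$,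 $\lVert\bm C(t)-\hat{\bm C}^{[r_k]}(t)\rVert_\infty\le\frac{A_{\delta,n,m}}{\sqrt{r_k}}+\lVert\bm C(t)-\bm C^{[r_k]}(t)\rVert_\infty$, and for all $k\le m-1$, $\lVert\bm C^{[r_k]}(t)-\bm C^{[r_{k+1}]}(t)-\hat{\bm C}^{[r_k]}(t)+\hat{\bm C}^{[r_{k+1}]}(t)\rVert_\infty\le A_{\delta,n,m}\sqrt{\frac{1-r_k/r_{k+1}}{r_k}}$. *)

From HB Require Import structures.
From mathcomp Require Import all_boot all_order all_algebra.
From mathcomp Require Import all_classical all_reals all_analysis.
Set Implicit Arguments. Unset Strict Implicit. Unset Printing Implicit Defensive.
Import Order.TTheory GRing.Theory Num.Theory.
Import numFieldNormedType.Exports.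
Local Open Scope classical_set_scope.
Local Open Scope ring_scope.

Definition Rd (R : realType) (d : nat) := g_sigma_algebraType (@open 'rV[R]_d).

Definition mxnorm_inf (R : realType) (n : nat) (M : 'M[R]_n) : R :=
  \big[Num.max/0]_(i < n) \big[Num.max/0]_(j < n) `|M i j|.

Definition corr_mx (R : realType) (d n : nat) (l : 'I_n -> Rd R d -> R)
  (D : probability (Rd R d) R) : 'M[R]_n :=
  \matrix_(i, j) (\int[D]_x (l i x * l j x)).

Definition win_avg (R : realType) (n : nat) (C : nat -> 'M[R]_n) (r t : nat)
  : 'M[R]_n := (r%:R)^-1 *: \sum_(t - r + 1 <= k < t.+1) C k.

Definition outer_mx (R : realType) (d n : nat) (l : 'I_n -> Rd R d -> R)
  (x : Rd R d) : 'M[R]_n := \matrix_(i, j) (l i x * l j x).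

Definition emp_avg (R : realType) (d n : nat) (l : 'I_n -> Rd R d -> R)
  (x : nat -> Rd R d) (r t : nat) : 'M[R]_n :=
  (r%:R)^-1 *: \sum_(t - r + 1 <= k < t.+1) outer_mx l (x k).

Definition A_const (R : realType) (delta : R) (n m : nat) : R :=
  Num.sqrt (2 * ln ((2 * m%:R - 1) * n%:R * (n%:R - 1) / delta)).

Definition T_thr (R : realType) (delta beta : R) (n m : nat) (r : nat -> nat)
  (k : nat) : R :=
  2 * beta * A_const delta n m / Num.sqrt (r k)%:R
  + A_const delta n m * Num.sqrt ((1 - (r k)%:R / (r k.+1)%:R) / (r k)%:R).

(* (A1): for every finite t, (X_1,...,X_t) ~ prod_{k=1}^t D_k, i.e. the joint
   law of (X_1,...,X_t) is the product measure (stated on measurable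
   rectangles, which determine it). *)
Definition assumption_A1 (R : realType) (d : nat) (dO : measure_display)
  (Omega : measurableType dO) (P : probability Omega R)
  (X : nat -> Omega -> Rd R d) (D : nat -> probability (Rd R d) R) : Prop :=
  forall (t : nat) (B : nat -> set (Rd R d)),
    (forall k, measurable (B k)) ->
    P (\big[setI/setT]_(1 <= k < t.+1) (X k @^-1` B k))
    = (\prod_(1 <= k < t.+1) D k (B k))%E.

(* The event E (evaluated at a realisation x = (X_k(omega))_k) *)
Definition event_E (R : realType) (d n m : nat) (l : 'I_n -> Rd R d -> R)
  (C : nat -> 'M[R]_n) (x : nat -> Rd R d) (delta : R) (r : nat -> nat)
  (t : nat) : Prop :=
  (forall k, (1 <= k <= m)%N ->
     mxnorm_inf (C t - emp_avg l x (r k) t)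
     <= A_const delta n m / Num.sqrt (r k)%:R
        + mxnorm_inf (C t - win_avg C (r k) t))
  /\
  (forall k, (1 <= k <= m - 1)%N ->
     mxnorm_inf (win_avg C (r k) t - win_avg C (r k.+1) t
                 - emp_avg l x (r k) t + emp_avg l x (r k.+1) t)
     <= A_const delta n m * Num.sqrt ((1 - (r k)%:R / (r k.+1)%:R) / (r k)%:R)).

From HB Require Import structures.
From mathcomp Require Import all_boot all_order all_algebra.
From mathcomp Require Import all_classical all_reals all_analysis.
From mathcomp Require Import zify ring.
Import Order.TTheory GRing.Theory Num.Theory.
Import numFieldNormedType.Exports.
Local Open Scope classical_set_scope.
Local Open Scope ring_scope.

(* Each C(s) in a window ending at t is within the total variation of C over
   that window of C(t) (telescoping), hence so is the window average C^[r](t).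
   The empirical gap Chat^[r_k](t) - Chat^[r_{k+1}](t) is the true gap
   C^[r_k](t) - C^[r_{k+1}](t) up to the error bounded by the second half of E,
   and the true gap is at most twice the variation over the longer window.
   So a gap above T(k) forces the variation above A beta / sqrt r_k.  The
   argument is deterministic: (A1), measurability, the +-1 values and the
   first half of E are not needed. *)

Section MaxEntryNorm.
Context {R : realType} {n : nat}.
Implicit Types (A B : 'M[R]_n) (c : R).

Lemma mxnorm_inf_ge0 A : 0 <= mxnorm_inf A.
Proof. by apply: bigmax_ge_id. Qed.

Lemma mxnorm_inf_entry A i j : `|A i j| <= mxnorm_inf A.
Proof.
apply: le_trans (le_bigmax 0 (fun i => \big[Num.max/0]_(j < n) `|A i j|) i).
exact: (le_bigmax 0 (fun j => `|A i j|) j).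
Qed.

Lemma mxnorm_inf_le A c :
  0 <= c -> (forall i j, `|A i j| <= c) -> mxnorm_inf A <= c.
Proof. by move=> ? ?; do 2![apply: bigmax_le => // ? _]. Qed.

Lemma mxnorm_infN A : mxnorm_inf (- A) = mxnorm_inf A.
Proof. by rewrite /mxnorm_inf; do 2![apply: eq_bigr => ? _]; rewrite mxE normrN. Qed.

Lemma mxnorm_infD A B : mxnorm_inf (A + B) <= mxnorm_inf A + mxnorm_inf B.
Proof.
apply: mxnorm_inf_le => [|i j]; first by rewrite addr_ge0 ?mxnorm_inf_ge0.
by rewrite mxE (le_trans (ler_normD _ _)) ?lerD ?mxnorm_inf_entry.
Qed.

Lemma mxnorm_infB A B : mxnorm_inf (A - B) <= mxnorm_inf A + mxnorm_inf B.
Proof. by rewrite -(mxnorm_infN B) mxnorm_infD. Qed.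

Lemma mxnorm_infZ_le c A : mxnorm_inf (c *: A) <= `|c| * mxnorm_inf A.
Proof.
apply: mxnorm_inf_le => [|i j]; first by rewrite mulr_ge0 ?mxnorm_inf_ge0.
by rewrite mxE normrM ler_wpM2l ?mxnorm_inf_entry.
Qed.

Lemma mxnorm_inf_sum I (s : seq I) (P : pred I) (F : I -> 'M[R]_n) :
  mxnorm_inf (\sum_(i <- s | P i) F i) <= \sum_(i <- s | P i) mxnorm_inf (F i).
Proof.
apply: (big_ind2 (fun A c => mxnorm_inf A <= c)) => // [|A a B b Aa Bb].
  by apply: mxnorm_inf_le => // i j; rewrite mxE normr0.
exact: le_trans (mxnorm_infD A B) (lerD Aa Bb).
Qed.

End MaxEntryNorm.

Section Variation.
Context {R : realType} {n : nat} (C : nat -> 'M[R]_n).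

Definition mx_variation (a b : nat) : R :=
  \sum_(a <= u < b) mxnorm_inf (C u - C u.+1).

Lemma mxnorm_inf_sub_le_variation a s b :
  (a <= s <= b)%N -> mxnorm_inf (C s - C b) <= mx_variation a b.
Proof.
case/andP=> le_as le_sb.
have telescope : C s - C b = \sum_(s <= u < b) (C u - C u.+1).
  by rewrite -opprB -telescope_sumr // -sumrN; apply: eq_bigr => u _; rewrite opprB.
rewrite telescope; apply: le_trans; first exact: mxnorm_inf_sum.
rewrite /mx_variation (big_cat_nat le_as le_sb) /= lerDr.
by apply: sumr_ge0 => u _; apply: mxnorm_inf_ge0.
Qed.

Lemma win_avg_sub_le_variation a r b :
  (0 < r)%N -> (r <= b)%N -> (a <= b - r + 1)%N ->
  mxnorm_inf (win_avg C r b - C b) <= mx_variation a b.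
Proof.
move=> r_gt0 le_rb le_a_start.
have r_neq0 : r%:R != 0 :> R by rewrite pnatr_eq0 -lt0n.
have window_size : (b.+1 - (b - r + 1) = r)%N by lia.
have -> : win_avg C r b - C b
          = r%:R^-1 *: \sum_(b - r + 1 <= s < b.+1) (C s - C b).
  rewrite sumrB sumr_const_nat window_size scalerBr.
  by rewrite -[C b *+ r]scaler_nat scalerA mulVf // scale1r.
apply: le_trans; first exact: mxnorm_infZ_le.
rewrite ger0_norm ?invr_ge0 ?ler0n // ler_pdivrMl ?ltr0n //.
apply: le_trans; first exact: mxnorm_inf_sum.
rewrite mulr_natl -[in X in _ <= X]window_size -sumr_const_nat.
apply: ler_sum_nat => s /andP[le_start_s lt_sb].
by apply: mxnorm_inf_sub_le_variation; rewrite (leq_trans le_a_start) //= -ltnS.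
Qed.

Lemma estimate_gap_le_variation (M1 M2 : 'M[R]_n) r1 r2 t :
  (0 < r1)%N -> (r1 <= r2)%N -> (r2 <= t)%N ->
  mxnorm_inf (M1 - M2)
  <= 2 * mx_variation (t - r2 + 1) t
     + mxnorm_inf (win_avg C r1 t - win_avg C r2 t - M1 + M2).
Proof.
move=> r1_gt0 le_r12 le_r2t.
set W1 := win_avg C r1 t; set W2 := win_avg C r2 t.
have -> : M1 - M2 = (W1 - C t) - (W2 - C t) - (W1 - W2 - M1 + M2).
  by apply/matrixP => i j; rewrite !mxE; ring.
have W1_near : mxnorm_inf (W1 - C t) <= mx_variation (t - r2 + 1) t.
  by apply: win_avg_sub_le_variation; lia.
have W2_near : mxnorm_inf (W2 - C t) <= mx_variation (t - r2 + 1) t.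
  by apply: win_avg_sub_le_variation; lia.
apply: le_trans (mxnorm_infB _ _) _; rewrite lerD2r mulr_natl mulr2n.
by apply: le_trans (mxnorm_infB _ _) _; apply: lerD.
Qed.

End Variation.

Theorem proposition8 (R : realType) (d n m : nat)
  (l : 'I_n -> Rd R d -> R)
  (hl_val : forall i x, l i x = 1 \/ l i x = -1)
  (hl_meas : forall i, measurable_fun setT (l i))
  (D : nat -> probability (Rd R d) R)
  (dO : measure_display) (Omega : measurableType dO) (P : probability Omega R)
  (X : nat -> Omega -> Rd R d)
  (hX_meas : forall k, measurable_fun setT (X k))
  (hA1 : assumption_A1 P X D)
  (delta beta : R) (hdelta : 0 < delta) (hbeta : 0 < beta)
  (r : nat -> nat) (t : nat)
  (hr1 : (0 < r 1)%N)
  (hr_incr : forall k, (1 <= k < m)%N -> (r k < r k.+1)%N)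
  (hrm : (r m <= t)%N)
  (omega : Omega)
  (hE : event_E m l (fun k => corr_mx l (D k)) (fun k => X k omega) delta r t) :
  forall k, (1 <= k <= m - 1)%N ->
    mxnorm_inf (emp_avg l (fun u => X u omega) (r k) t
                - emp_avg l (fun u => X u omega) (r k.+1) t)
      > T_thr delta beta n m r k ->
    \sum_(t - r k.+1 + 1 <= u < t)
        mxnorm_inf (corr_mx l (D u) - corr_mx l (D u.+1))
      > A_const delta n m * beta / Num.sqrt (r k)%:R.
Proof.
move=> k k_range gap_gt_T.
have r_homo : {in [pred i | 1 <= i <= m]%N &, {homo r : i j / i <= j}}%N.
  apply: homo_leq_in => //; first exact: leq_trans.
    by move=> i j; rewrite !inE => /andP[? ?] /andP[? ?] ? /andP[? ?]; rewrite inE; lia.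
  by move=> i; rewrite !inE => /andP[? ?] /andP[? ?]; apply/ltnW/hr_incr; lia.
have r_k_gt0 : (0 < r k)%N by apply: leq_trans hr1 (r_homo _ _ _ _ _); rewrite ?inE; lia.
have r_k_lt : (r k < r k.+1)%N by apply: hr_incr; lia.
have r_k1_le_t : (r k.+1 <= t)%N by apply: leq_trans (r_homo _ _ _ _ _) hrm; rewrite ?inE; lia.
rewrite -/(mx_variation _ _ _) ltNge; apply: contraTN gap_gt_T => small_variation.
rewrite -leNgt; apply: le_trans (estimate_gap_le_variation (fun u => corr_mx l (D u))
  _ _ _ _ _ r_k_gt0 (ltnW r_k_lt) r_k1_le_t) _.
by rewrite /T_thr lerD ?hE.2 // -mulrA -mulrA ler_pM2l // mulrA [beta * _]mulrC.
Qed.
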